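(* For every $\alpha\ge0$ and $\beta\le0$, $$\min\Big\{c^{\top}x+\mathbf{1}^{\top}\theta:\ x\in\mathcal{X},\ \theta\in\operatorname{proj}_\theta(\Gamma(x,\alpha,\beta))\Big\}\ \ge\ \sigma_x(\alpha)+\sigma_y(\alpha,\beta)+\nu(\alpha,\beta).$$
   Context: $G=(V,E)$ complete undirected graph, $V=\{0\}\cup V_+$ ($V_+$ customers), edge costs $c\in\mathbb{Q}^E_{\ge0}$; capacity $C>0$; scenarios $\xi\in[N]$ with demands $d^\xi\in\mathbb{Q}^{V_+}_{\ge0}$ ($d^\xi(v)\le C$) and probabilities $p_\xi\ge0$, $\sum_\xi p_\xi=1$. $f(S)=\sum_{i\in S}f(i)$; $k_\xi(S)=\lceil d^\xi(S)/C\rceil$; $\bar d=\sum_\xi p_\xi d^\xi$. $E(S)$: edges with both ends in $S$; $\delta(S)$: edges with exactly one end in $S$. $\mathcal{X}$ is one of $\mathcal{X}_{\mathrm{sub}}=\{x\in[0,2]^E: x(\delta(v))=2\ \forall v\in V_+,\ x(E(S))\le|S|-1\ \forall\emptyset\ne S\subseteq V_+\}$ or $\mathcal{X}_{\mathrm{cvrp}}=\mathcal{X}_{\mathrm{sub}}\cap\{x:x(\delta(0))=2k,\ x(E(S))\le|S|-\lceil\bar d(S)/C\rceil\ \forall\emptyset\ne S\subseteq V_+\}$. Fixed $w\in\mathbb{Q}^{V_+}_{\ge0}$, $b\in\mathbb{Z}^{V_+}_{\ge0}$; $[\mathbf 0,b]^N=\{y\in\mathbb{R}^{[N]\times V_+}:0\le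 y^\xi_v\le b_v\}$. Multipliers $\alpha=(\alpha^\xi_S)_{\xi\in[N],\emptyset\ne S\subseteq V_+}$, $\beta=(\beta^\xi_v)_{\xi\in[N],v\in V_+}$. $\nu(\alpha,\beta)=\sum_\xi\sum_S\alpha^\xi_S(k_\xi(S)-|S|)+\sum_\xi\sum_v\beta^\xi_vb_v$. $\sigma_x(\alpha)=\min_{x\in\mathcal{X}}\{c^\top x+\sum_{\xi}\sum_{S}\alpha^\xi_S\,x(E(S))\}$ and $\sigma_y(\alpha,\beta)=\min_{y\ge0}\sum_\xi\sum_v(p_\xi w_v-\beta^\xi_v-\sum_{S\ni v}\alpha^\xi_S)y^\xi_v$ (possibly $-\infty$). For $x\in\mathcal{X}$, $\Gamma(x,\alpha,\beta)$ is the set of $(\theta,y)\in\mathbb{R}^{V_+}_{\ge0}\times[\mathbf 0,b]^N$ with $\sum_\xi\sum_v(\beta^\xi_v+\sum_{S\ni v}\alpha^\xi_S)y^\xi_v\ge\sum_\xi\sum_S\alpha^\xi_Sx(E(S))+\nu(\alpha,\beta)$ and $\theta_v\ge\sum_\xi p_\xi w_vy^\xi_v$ for all $v\in V_+$; $\operatorname{proj}_\theta$ denotes projection onto the $\theta$-coordinates. *)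

From HB Require Import structures.
From mathcomp Require Import all_boot all_order all_algebra.
From mathcomp Require Import all_classical all_reals ereal.
Set Implicit Arguments. Unset Strict Implicit. Unset Printing Implicit Defensive.
Import Order.TTheory GRing.Theory Num.Theory.
Local Open Scope ring_scope.
Local Open Scope classical_set_scope.

(* Vertex set V = {0} u V_+ is modelled as [option Vp]: [None] is the depot 0,
   [Some v] the customer v in V_+ = Vp.  Edge vectors are functions
   [{set option Vp} -> R]; only their values on E matter. *)

Section SVRP.
Variable R : realType.
Variable Vp : finType.

Definition vtx := option Vp.
Definition edges : {set {set vtx}} := [set e : {set vtx} | #|e| == 2%N].

Definition lift_set (S : {set Vp}) : {set vtx} := [set Some v | v in S].

Definition xE (x : {set vtx} -> R) (S : {set Vp}) : R :=
  \sum_(e in edges | e \subset lift_set S) x e.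
Definition xdelta (x : {set vtx} -> R) (T : {set vtx}) : R :=
  \sum_(e in edges | #|e :&: T| == 1%N) x e.

Definition cost (c : {set vtx} -> rat) (x : {set vtx} -> R) : R :=
  \sum_(e in edges) ratr (c e) * x e.

Definition fsum (f : Vp -> rat) (S : {set Vp}) : rat := \sum_(i in S) f i.

Definition kk (C : rat) (d : Vp -> rat) (S : {set Vp}) : int :=
  Num.ceil (fsum d S / C).

Definition dbar (N : nat) (p : 'I_N -> rat) (d : 'I_N -> Vp -> rat) : Vp -> rat :=
  fun v => \sum_(xi < N) p xi * d xi v.

Inductive Xkind := Xsub | Xcvrp.

Definition in_Xsub (x : {set vtx} -> R) : Prop :=
  [/\ (forall e, e \in edges -> 0 <= x e <= 2),
      (forall v : Vp, xdelta x [set Some v] = 2) &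
      (forall S : {set Vp}, S != finset.set0 -> xE x S <= (#|S|%:R - 1))].

Definition in_X (K : Xkind) (k : nat) (C : rat) (N : nat) (p : 'I_N -> rat)
    (d : 'I_N -> Vp -> rat) (x : {set vtx} -> R) : Prop :=
  match K with
  | Xsub => in_Xsub x
  | Xcvrp => [/\ in_Xsub x,
                 xdelta x [set None] = 2 * k%:R &
                 (forall S : {set Vp}, S != finset.set0 ->
                    xE x S <= #|S|%:R - (kk C (dbar p d) S)%:~R)]
  end.

Definition nu (N : nat) (C : rat) (d : 'I_N -> Vp -> rat) (b : Vp -> nat)
    (alpha : 'I_N -> {set Vp} -> R) (beta : 'I_N -> Vp -> R) : R :=
  \sum_(xi < N) \sum_(S : {set Vp} | S != finset.set0)
      alpha xi S * ((kk C (d xi) S)%:~R - #|S|%:R)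
  + \sum_(xi < N) \sum_(v : Vp) beta xi v * (b v)%:R.

Definition alpha_xE (N : nat) (alpha : 'I_N -> {set Vp} -> R)
    (x : {set vtx} -> R) : R :=
  \sum_(xi < N) \sum_(S : {set Vp} | S != finset.set0) alpha xi S * xE x S.

Definition alpha_at (N : nat) (alpha : 'I_N -> {set Vp} -> R) (xi : 'I_N)
    (v : Vp) : R :=
  \sum_(S : {set Vp} | (S != finset.set0) && (v \in S)) alpha xi S.

(* sigma_x(alpha) = inf_{x in X} c^T x + sum alpha x(E(S))  (+oo if X empty) *)
Definition sigma_x (K : Xkind) (k : nat) (C : rat) (N : nat) (p : 'I_N -> rat)
    (d : 'I_N -> Vp -> rat) (c : {set vtx} -> rat)
    (alpha : 'I_N -> {set Vp} -> R) : \bar R :=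
  ereal_inf [set ((cost c x + alpha_xE alpha x)%:E) |
               x in [set x | in_X K k C p d x]].

Definition sigma_y (N : nat) (p : 'I_N -> rat) (w : Vp -> rat)
    (alpha : 'I_N -> {set Vp} -> R) (beta : 'I_N -> Vp -> R) : \bar R :=
  ereal_inf [set ((\sum_(xi < N) \sum_(v : Vp)
                     (ratr (p xi) * ratr (w v) - beta xi v - alpha_at alpha xi v)
                       * y xi v)%:E) |
               y in [set y : 'I_N -> Vp -> R | forall xi v, 0 <= y xi v]].

Definition in_Gamma (N : nat) (C : rat) (p : 'I_N -> rat) (d : 'I_N -> Vp -> rat)
    (w : Vp -> rat) (b : Vp -> nat) (x : {set vtx} -> R)
    (alpha : 'I_N -> {set Vp} -> R) (beta : 'I_N -> Vp -> R)
    (theta : Vp -> R) (y : 'I_N -> Vp -> R) : Prop :=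
  [/\ (forall v, 0 <= theta v),
      (forall xi v, 0 <= y xi v <= (b v)%:R),
      \sum_(xi < N) \sum_(v : Vp) (beta xi v + alpha_at alpha xi v) * y xi v
        >= alpha_xE alpha x + nu C d b alpha beta &
      (forall v, theta v >= \sum_(xi < N) ratr (p xi) * ratr (w v) * y xi v)].

(* min { c^T x + 1^T theta : x in X, theta in proj_theta Gamma(x,alpha,beta) }
   (as an infimum in the extended reals; +oo if infeasible) *)
Definition lhs_value (K : Xkind) (k : nat) (C : rat) (N : nat) (p : 'I_N -> rat)
    (d : 'I_N -> Vp -> rat) (c : {set vtx} -> rat) (w : Vp -> rat)
    (b : Vp -> nat) (alpha : 'I_N -> {set Vp} -> R) (beta : 'I_N -> Vp -> R)
    : \bar R :=
  ereal_inf [set ((cost c xt.1 + \sum_(v : Vp) xt.2 v)%:E) |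
    xt in [set xt : ({set vtx} -> R) * (Vp -> R) |
             in_X K k C p d xt.1 /\
             exists y, in_Gamma C p d w b xt.1 alpha beta xt.2 y]].

End SVRP.

(* Weak Lagrangian duality.  For a feasible pair (x, theta) with a witness y of
   theta in Gamma(x, alpha, beta), x bounds sigma_x(alpha) through its own
   Lagrangian value and y (being nonnegative) bounds sigma_y(alpha, beta); the
   defining inequality of Gamma then cancels the multiplier terms against
   nu(alpha, beta) and the theta-constraints absorb the expected recourse cost.
   No sign condition on alpha, beta, c, d, p or w is needed. *)

From HB Require Import structures.
From mathcomp Require Import all_boot all_order all_algebra.
From mathcomp Require Import all_classical all_reals ereal.
From mathcomp Require Import lra.

Set Implicit Arguments.
Unset Strict Implicit.
Unset Printing Implicit Defensive.
Import Order.TTheory GRing.Theory Num.Theory.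
Local Open Scope ring_scope.

Section LagrangianBounds.
Variables (R : realType) (Vp : finType) (N : nat).
Variables (C : rat) (d : 'I_N -> Vp -> rat) (p : 'I_N -> rat).
Variables (w : Vp -> rat) (b : Vp -> nat).
Variables (alpha : 'I_N -> {set Vp} -> R) (beta : 'I_N -> Vp -> R).

Definition y_objective (y : 'I_N -> Vp -> R) : R :=
  \sum_(xi < N) \sum_(v : Vp)
    (ratr (p xi) * ratr (w v) - beta xi v - alpha_at alpha xi v) * y xi v.

Lemma sigma_x_le_objective K k c (x : {set vtx Vp} -> R) :
  in_X K k C p d x ->
  (sigma_x K k C p d c alpha <= (cost c x + alpha_xE alpha x)%:E)%E.
Proof. by move=> hx; apply: ereal_inf_lbound; exists x. Qed.

Lemma sigma_y_le_objective y :
  (forall xi v, 0 <= y xi v) -> (sigma_y p w alpha beta <= (y_objective y)%:E)%E.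
Proof. by move=> hy; apply: ereal_inf_lbound; exists y. Qed.

Lemma y_objectiveE y :
  y_objective y =
    \sum_(xi < N) \sum_(v : Vp) ratr (p xi) * ratr (w v) * y xi v
  - \sum_(xi < N) \sum_(v : Vp) (beta xi v + alpha_at alpha xi v) * y xi v.
Proof.
rewrite -sumrB; apply: eq_bigr => xi _; rewrite -sumrB; apply: eq_bigr => v _.
by rewrite -mulrBl opprD addrA.
Qed.

Lemma in_Gamma_objective_bound x theta y :
  in_Gamma C p d w b x alpha beta theta y ->
  alpha_xE alpha x + y_objective y + nu C d b alpha beta <= \sum_(v : Vp) theta v.
Proof.
case=> _ _ hGamma htheta; rewrite y_objectiveE.
have hrecourse : \sum_(xi < N) \sum_(v : Vp) ratr (p xi) * ratr (w v) * y xi v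
                 <= \sum_(v : Vp) theta v.
  by rewrite exchange_big /=; apply: ler_sum => v _; exact: htheta.
lra.
Qed.

End LagrangianBounds.

Theorem theorem6 (R : realType) (Vp : finType) (N : nat)
    (c : {set vtx Vp} -> rat) (C : rat) (d : 'I_N -> Vp -> rat) (p : 'I_N -> rat)
    (K : Xkind) (k : nat) (w : Vp -> rat) (b : Vp -> nat)
    (hc : forall e, e \in edges Vp -> 0 <= c e)
    (hC : 0 < C)
    (hd : forall xi v, 0 <= d xi v <= C)
    (hp : forall xi, 0 <= p xi)
    (hp1 : \sum_(xi < N) p xi = 1)
    (hw : forall v, 0 <= w v)
    (alpha : 'I_N -> {set Vp} -> R) (beta : 'I_N -> Vp -> R)
    (halpha : forall xi (S : {set Vp}), S != finset.set0 -> 0 <= alpha xi S)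
    (hbeta : forall xi v, beta xi v <= 0) :
  (sigma_x K k C p d c alpha + sigma_y p w alpha beta
     + (nu C d b alpha beta)%:E <= lhs_value K k C p d c w b alpha beta)%E.
Proof.
apply/ereal_infP => _ [[x theta] [/= hx [y hGamma]] <-].
have hy : forall xi v, 0 <= y xi v.
  by move=> xi v; case: hGamma => _ /(_ xi v) /andP[].
have hsigma_x := sigma_x_le_objective alpha c hx.
have hsigma_y := sigma_y_le_objective p w alpha beta hy.
apply: (le_trans (leeD (leeD hsigma_x hsigma_y) (lexx _))).
rewrite -!EFinD lee_fin -2!addrA lerD2l addrA.
exact: in_Gamma_objective_bound hGamma.
Qed.
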